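(* For every $\rho>0$ there exists $k_0$ such that for all $k\ge k_0$ the following holds. Let $G$ be a $\rho$-cut-dense graph on $n\le 100k$ vertices with $\delta(G)\ge k/2$. Then for every natural number $\ell\le 2k/5$ and every pair of distinct vertices $y,z\in V(G)$, there exists a path from $y$ to $z$ in $G$ whose length lies in the interval $[\ell+1,\ell+24000]$.
   Context: Graphs are finite and simple. For $\rho\ge0$, $G$ is $\rho$-cut-dense if there is no partition of $V(G)$ into two sets $A,B$ with $e(A,B)<\rho|A||B|$. The length of a path is its number of edges. *)

From mathcomp Require Import all_boot all_order all_algebra.
From mathcomp Require Import reals.
Set Implicit Arguments. Unset Strict Implicit. Unset Printing Implicit Defensive.
Import Order.TTheory GRing.Theory Num.Theory.

Definition simple_graph (T : finType) (e : rel T) : Prop :=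
  symmetric e /\ irreflexive e.

(* number of edges between A and B (ordered pairs (a,b), a in A, b in B, ab edge);
   for disjoint A B this is e(A,B). *)
Definition e_between (T : finType) (e : rel T) (A B : {set T}) : nat :=
  #|[set p : T * T | (p.1 \in A) && (p.2 \in B) && e p.1 p.2]|.

Definition cut_dense (R : realFieldType) (rho : R) (T : finType) (e : rel T) : Prop :=
  forall A : {set T},
    ~ ((e_between e A (~: A))%:R < rho * (#|A|%:R) * (#|~: A|%:R))%R.

Definition degree (T : finType) (e : rel T) (v : T) : nat := #|[set u | e v u]|.

Definition min_deg_ge_half (T : finType) (e : rel T) (k : nat) : Prop :=
  forall v : T, k <= 2 * degree e v.

Definition is_path_len (T : finType) (e : rel T) (y z : T) (len : nat) : Prop :=
  exists p : seq T, [/\ path e y p, uniq (y :: p), last y p = z & size p = len].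

From mathcomp Require Import all_boot all_order all_algebra.
From mathcomp Require Import reals.
From mathcomp Require Import zify lra.
Set Implicit Arguments. Unset Strict Implicit. Unset Printing Implicit Defensive.
Import Order.TTheory GRing.Theory Num.Theory.

(* Cut-density with rho k > 2 rules out cut vertices.  Without cut vertices, a
   depth-first search from y that keeps heading back towards z produces a y-z
   path containing the whole neighbourhood of one of its vertices, hence of
   length at least k/2 > l.  Keep the first l vertices of this path and
   reconnect its (l+1)-st vertex to z while avoiding them: there every vertex
   still has at least k/10 neighbours and n <= 100 k, so among 1001 vertices
   spaced 3 apart along a walk two share a neighbour, and every walk can be
   shortcut to a path with at most 3000 edges. *)

Section SeqFacts.
Variable T : Type.
Implicit Types (s q : seq T) (x y : T).

Lemma last_take_nth x y q n : n <= size q -> last x (take n q) = nth y (x :: q) n.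
Proof. by elim: q x n => [|a q IH] x [|n] //= /IH. Qed.

Lemma last_drop x y s i : i < size s -> last x (drop i s) = last y s.
Proof. by elim: s i x y => // a s IH [|i] x y //= /IH; apply. Qed.

Lemma path_drop_nth (r : rel T) x y q n : path r x q -> path r (nth y (x :: q) n) (drop n q).
Proof. by elim: q x n => [|a q IH] x [|n] //= /andP[_ /IH]. Qed.

Lemma path_drop_find (r : rel T) x s : sorted r s -> has (r x) s ->
  path r x (drop (find (r x) s) s).
Proof.
move=> rs hs; have fs : find (r x) s < size s by rewrite -has_find.
by have := drop_sorted (find (r x) s) rs; rewrite (drop_nth x) //= nth_find.
Qed.

Lemma split_last_has (p : pred T) x s : has p (x :: s) ->
  exists s1 s2, [/\ s = s1 ++ s2, p (last x s1) & ~~ has p s2].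
Proof.
elim/last_ind: s => [|s a IH] /=; first by rewrite orbF => px; exists [::], [::].
rewrite -cats1 has_cat /= orbF orbA; have [pa _ | npa] := boolP (p a).
  by exists (s ++ [:: a]), [::]; rewrite cats0 last_cat.
rewrite orbF => /IH[s1 [s2 [-> ps1 ns2]]]; exists s1, (s2 ++ [:: a]).
by rewrite catA has_cat /= (negbTE npa) (negbTE ns2).
Qed.

End SeqFacts.

Lemma mem_drop_find (T : eqType) (p : pred T) (s : seq T) w :
  w \in s -> p w -> w \in drop (find p s) s.
Proof.
elim: s => // a s IH; rewrite in_cons /=; case: ifP => pa; first by rewrite drop0 in_cons.
by case/predU1P => [-> | /IH]; [rewrite pa | apply].
Qed.

Section Induced.
Variables (T : finType) (e : rel T).
Implicit Types (X Y B S : {set T}) (a u v w : T).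

Definition induced X : rel T := fun u v => [&& u \in X, v \in X & e u v].

Definition component X a : {set T} := [set u | connect (induced X) a u].

Lemma path_induced X a p : path (induced X) a p -> path e a p.
Proof. by apply: sub_path => u v /and3P[]. Qed.

Lemma path_induced_sub X a p : path (induced X) a p -> {subset p <= X}.
Proof. by elim: p a => //= b p IH a /andP[/and3P[_ bX _] /IH pX] u /predU1P[->|/pX]. Qed.

Lemma induced_path X a p : {subset a :: p <= X} -> path e a p -> path (induced X) a p.
Proof.
move=> pX; apply: (sub_in_path (P := [in X])); last by apply/allP.
by move=> u v uX vX euv; rewrite /induced uX vX.
Qed.

Lemma induced_subset X Y : X \subset Y -> subrel (induced X) (induced Y).
Proof. by move=> /subsetP sXY u v /and3P[/sXY uY /sXY vY euv]; rewrite /induced uY vY. Qed.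

Lemma induced_sym X : symmetric e -> symmetric (induced X).
Proof. by move=> esym u v; rewrite /induced esym andbCA. Qed.

Lemma degree_induced_compl S u : u \notin S ->
  degree e u <= #|[set w | induced (~: S) u w]| + #|S|.
Proof.
move=> uS; apply: leq_trans (leq_card_setU _ _); apply/subset_leq_card/subsetP => w.
by rewrite !inE /induced !inE uS /=; case: (w \in S); rewrite ?orbT // orbF.
Qed.

Lemma component_refl X a : a \in component X a.
Proof. by rewrite inE connect0. Qed.

Lemma component_trans X a u v :
  u \in component X a -> v \in component X u -> v \in component X a.
Proof. by rewrite !inE; apply: connect_trans. Qed.

Lemma component_closed X a u w : u \in component X a -> u \in X -> w \in X -> e u w ->
  w \in component X a.
Proof.
move=> au uX wX euw; apply: component_trans au _.
by rewrite inE connect1 // /induced uX wX.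
Qed.

Lemma path_component X a p : path (induced X) a p -> {subset p <= component X a}.
Proof.
elim: p a => //= b p IH a /andP[ab /IH pb] u.
have ba : b \in component X a by rewrite inE connect1.
by case/predU1P=> [->|/pb]; last exact: component_trans.
Qed.

Lemma component_sub_setU1 X a : component X a \subset a |: X.
Proof.
apply/subsetP => u; rewrite inE => /connectP[p pp ->]; rewrite in_setU1.
case: (lastP p) pp => [|s x]; rewrite ?eqxx // last_rcons => /path_induced_sub ->.
  by rewrite orbT.
by rewrite mem_rcons mem_head.
Qed.

Lemma component_sub X a : a \in X -> component X a \subset X.
Proof.
by move=> aX; apply/subsetP => u /(subsetP (component_sub_setU1 X a)) /setU1P[->|].
Qed.

Lemma component_subset X Y a : X \subset Y -> component X a \subset component Y a.
Proof.
move=> sXY; apply/subsetP => u; rewrite !inE; apply: connect_sub => v w vw.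
by apply: connect1; apply: induced_subset vw.
Qed.

Lemma extremal_path_step X a q u : path (induced X) a q -> uniq (a :: q) ->
    u \in component (X :\: [set v in belast a q]) (last a q) -> u != last a q ->
  exists q', [/\ path (induced X) a q', uniq (a :: q'), last a q' = u &
    component (X :\: [set v in belast a q']) u
      \proper component (X :\: [set v in belast a q]) (last a q)].
Proof.
set b := last a q; set P := belast a q => pq uq bu ub.
have := bu; rewrite inE => /connectP[p0 pp0 up0]; subst u.
move: bu ub; case: (shortenP pp0) => q1 pq1 uq1 _ bu ub.
have q1X : {subset q1 <= X :\: [set v in P]} := path_induced_sub pq1.
have [bP uP] : b \notin P /\ uniq P by apply/andP; rewrite -rcons_uniq -lastI.
have bP' : b \in belast b q1.
  by case: q1 {pq1 uq1 q1X bu} ub => [|? ?] /=; rewrite ?eqxx ?mem_head.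
exists (q ++ q1); split.
- by rewrite cat_path pq (sub_path (induced_subset (subsetDl _ _)) pq1).
- rewrite -cat_cons lastI cat_rcons cat_uniq uP uq1 andbT /= negb_or bP /=.
  by apply/hasPn => v /q1X; rewrite !inE => /andP[].
- by rewrite last_cat.
apply/properP; split.
  have sP : X :\: [set v in belast a (q ++ q1)] \subset X :\: [set v in P].
    by apply: setDS; apply/subsetP => w; rewrite !inE belast_cat mem_cat => ->.
  apply/subsetP => v /(subsetP (component_subset _ sP)) vC.
  exact: component_trans bu vC.
exists b; first exact: component_refl.
apply/negP => /(subsetP (component_sub_setU1 _ _)) /setU1P[bu1|].
  by move: ub; rewrite -bu1 eqxx.
by rewrite !inE belast_cat mem_cat bP' orbT.
Qed.

Lemma extremal_path X a B : (exists2 u, u \in component X a & u \in B) ->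
  exists q, [/\ path (induced X) a q, uniq (a :: q), last a q \in B &
    forall u, u \in component (X :\: [set v in belast a q]) (last a q) -> u \in B ->
      u = last a q].
Proof.
case=> u; rewrite inE => /connectP[p0 pp0 ->]; case: (shortenP pp0) => q0 pq0 uq0 _ q0B.
have [n] := ubnP #|component (X :\: [set v in belast a q0]) (last a q0)|.
elim: n q0 pq0 uq0 q0B => // n IH q pq uq qB Cn.
have [lonely|] := boolP [forall u in component (X :\: [set v in belast a q]) (last a q),
  (u \in B) ==> (u == last a q)].
  by exists q; split=> // v vC vB; apply/eqP; move/forall_inP/(_ v vC): lonely; rewrite vB.
case/forall_inPn => v vC; rewrite negb_imply => /andP[vB vq].
have [q' [pq' uq' lq' Cprop]] := extremal_path_step pq uq vC vq.
apply: (IH q') => //; first by rewrite lq'.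
by rewrite lq'; apply: leq_trans (proper_card Cprop) _; rewrite -ltnS.
Qed.

End Induced.

Lemma card_bigcup_disjoint (T : finType) (A : nat -> {set T}) n :
    (forall i j, i < j < n -> [disjoint A i & A j]) ->
  #|\bigcup_(i < n) A i| = \sum_(i < n) #|A i|.
Proof.
elim: n => [|n IH] dis; first by rewrite big_ord0 big_ord0 cards0.
rewrite !big_ord_recr /= -IH; last by move=> i j /andP[ij jn]; rewrite dis // ij ltnW.
apply/eqP; rewrite (leq_card_setU _ _).2 disjoint_sym.
by apply/bigcup_disjointP => i _; rewrite disjoint_sym dis // ltn_ord /=.
Qed.

Section ShortPath.
Variables (T : finType) (r : rel T) (M : nat).
Hypothesis rsym : symmetric r.
Hypothesis rdeg : forall u v, r u v -> #|T| < M.+1 * #|[set w | r u w]|.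

Lemma overlapping_nbhds (c : nat -> T) : (forall i, i <= M -> exists v, r (c i) v) ->
  exists i j u, [/\ i < j <= M, r (c i) u & r (c j) u].
Proof.
move=> nbr; pose A i := [set u | r (c i) u].
have [/existsP[i /existsP[j /existsP[u /and3P[ij riu rju]]]] | dis] :=
  boolP [exists i : 'I_M.+1, exists j : 'I_M.+1, exists u, [&& i < j, r (c i) u & r (c j) u]].
  by exists i, j, u; rewrite ij -ltnS ltn_ord.
have {}dis i j : i < j < M.+1 -> [disjoint A i & A j].
  move=> /andP[ij jM]; apply/pred0P => u; rewrite /= !inE; apply/negP => /andP[riu rju].
  move/negP: dis; apply; apply/existsP; exists (Ordinal (ltn_trans ij jM)).
  by apply/existsP; exists (Ordinal jM); apply/existsP; exists u; rewrite /= ij riu rju.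
have sumT : \sum_(i < M.+1) #|A i| <= #|T| by rewrite -card_bigcup_disjoint ?max_card.
have : \sum_(i < M.+1) #|T|.+1 <= \sum_(i < M.+1) M.+1 * #|A i|.
  by apply: leq_sum => i _; have [v] := nbr i (ltn_ord i); apply: rdeg.
rewrite sum_nat_const card_ord -big_distrr leq_mul2l /= => /leq_trans/(_ sumT).
by rewrite ltnn.
Qed.

Lemma walk_shortcut x q : path r x q -> 3 * M < size q ->
  exists q', [/\ path r x q', last x q' = last x q & size q' < size q].
Proof.
(* Two of the vertices at positions 0, 3, ..., 3M share a neighbour u, and the
   detour through u saves at least one edge. *)
move=> pq sq; pose c i := nth x q (3 * i).
have [i [j [u [/andP[ij jM] riu rju]]]] : exists i j u, [/\ i < j <= M, r (c i) u & r (c j) u].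
  apply: overlapping_nbhds => i iM; exists (nth x (x :: q) (3 * i)); rewrite rsym.
  by move/pathP: pq; apply; apply: leq_ltn_trans sq; rewrite leq_mul2l.
have iq : (3 * i).+1 <= size q by lia.
have jq : 3 * j < size q by lia.
exists (take (3 * i).+1 q ++ u :: drop (3 * j) q); split.
- rewrite cat_path take_path //= (last_take_nth _ x) //= riu (drop_nth x) //= rsym rju.
  by have := path_drop_nth x (3 * j).+1 pq.
- by rewrite last_cat /= (last_drop _ x).
- by rewrite size_cat size_take_min /= size_drop; lia.
Qed.

Lemma short_path x q : path r x q ->
  exists q', [/\ path r x q', uniq (x :: q'), last x q' = last x q & size q' <= 3 * M].
Proof.
have [n] := ubnP (size q); elim: n q => // n IH q qn pq.
have [sq | sq] := leqP (size q) (3 * M).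
  case: (shortenP pq) => q' pq' uq' sub; exists q'; split=> //.
  by apply: leq_trans sq; apply: uniq_leq_size sub; case/andP: uq'.
have [q' [pq' <- sq']] := walk_shortcut pq sq.
by apply: IH pq'; apply: leq_trans sq' _.
Qed.

End ShortPath.

Section Splice.
Variables (T : finType) (e : rel T) (y : T) (p : seq T) (l : nat).
Hypotheses (pp : path e y p) (up : uniq (y :: p)) (lp : l <= size p).
Let S := [set u in take l (y :: p)].
Let x := nth y (y :: p) l.

Lemma split_at_nth : y :: p = take l (y :: p) ++ x :: drop l p.
Proof. by rewrite -{1}(cat_take_drop l (y :: p)) (drop_nth y) //= ltnS. Qed.

Lemma suffix_notin_prefix u : u \in x :: drop l p -> u \in ~: S.
Proof.
move=> ud; rewrite !inE; move: up; rewrite [in uniq _]split_at_nth cat_uniq.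
by case/and3P=> _ /hasPn /(_ u ud).
Qed.

Lemma suffix_avoids_prefix : path (induced e (~: S)) x (drop l p).
Proof. by apply: induced_path; [apply: suffix_notin_prefix | apply: path_drop_nth]. Qed.

Lemma splice_path q : path (induced e (~: S)) x q -> uniq (x :: q) ->
  [/\ path e y (take l p ++ q), uniq (y :: take l p ++ q),
      last y (take l p ++ q) = last x q & size (take l p ++ q) = l + size q].
Proof.
move=> pq uq; have lastx : last y (take l p) = x by rewrite (last_take_nth _ y).
split.
- by rewrite cat_path take_path // lastx (path_induced pq).
- have -> : y :: take l p ++ q = take l (y :: p) ++ x :: q.
    by rewrite -cat_cons -/(take l.+1 (y :: p)) (take_nth y) ?ltnS // cat_rcons.
  rewrite cat_uniq take_uniq // uq andbT; apply/hasPn => u uq'.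
  have : u \in ~: S.
    case/predU1P: uq' => [-> | /(path_induced_sub pq) //].
    exact/suffix_notin_prefix/mem_head.
  by rewrite !inE.
- by rewrite last_cat lastx.
- by rewrite size_cat size_takel.
Qed.

End Splice.

(* Deleting any single vertex leaves the graph connected. *)
Definition no_cut_vertex (T : finType) (e : rel T) : Prop :=
  forall (K : {set T}) (v w : T), K != set0 -> w \notin K -> w != v ->
    ~ (forall u x, u \in K -> e u x -> (x \in K) || (x == v)).

Section LongPath.
Variables (T : finType) (e : rel T).
Hypotheses (esym : symmetric e) (eirr : irreflexive e) (two_conn : no_cut_vertex e).
Variables y z : T.

(* State of a depth-first search: y :: fp is the path built so far, with head
   last y fp; Q is a path to z kept in reserve; D is the unexplored region,
   attached to y :: fp only at the head. *)
Record dfs_state (fp Q : seq T) (D : {set T}) : Prop := DfsState {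
  dfs_path : path e y fp;
  dfs_uniq : uniq (y :: fp);
  dfs_tail_nonnil : Q != [::];
  dfs_tail_path : sorted e Q;
  dfs_tail_uniq : uniq Q;
  dfs_tail_last : last z Q = z;
  dfs_disjoint : forall u, u \in y :: fp -> u \notin Q;
  dfs_head : last y fp \in D;
  dfs_region_path : forall u, u \in D -> u \in y :: fp -> u = last y fp;
  dfs_region_tail : forall u, u \in D -> u \notin Q;
  dfs_closed : forall u w, u \in D -> e u w ->
    [|| w \in D, w \in Q | (u == last y fp) && (w \in y :: fp)];
  dfs_reach : exists2 u, u \in component e D (last y fp) & has (e u) Q }.

Lemma z_in_dfs_tail fp Q D : dfs_state fp Q D -> z \in Q.
Proof.
move=> st; rewrite -{1}(dfs_tail_last st); have nQ := dfs_tail_nonnil st; clear st.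
by case: Q nQ => [|x Q] // _; rewrite /= mem_last.
Qed.

(* q leads from f through D to a vertex b next to Q, and no other vertex of
   the component E of b in D minus the trail P is next to Q.  If E = {b} the
   path is complete and contains every neighbour of b; otherwise some vertex
   of E other than b sees the trail, since b is not a cut vertex. *)
Section Step.
Variables (fp Q : seq T) (D : {set T}) (q : seq T).
Hypothesis st : dfs_state fp Q D.
Let f := last y fp.
Hypotheses (pq : path (induced e D) f q) (uq : uniq (f :: q)).
Let b := last f q.
Let P := belast f q.
Let E := component e (D :\: [set v in P]) b.
Hypothesis bQ : has (e b) Q.
Hypothesis lonely : forall u, u \in E -> has (e u) Q -> u = b.
Let Qb := drop (find (e b) Q) Q.

Lemma step_walk_in_region : {subset f :: q <= D}.
Proof. by move=> u /predU1P[-> | /(path_induced_sub pq)] //; apply: dfs_head st. Qed.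

Lemma step_trail_in_region : {subset P <= D}.
Proof. by move=> u /mem_belast /step_walk_in_region. Qed.

Lemma step_end_notin_trail : b \notin P /\ uniq P.
Proof. by apply/andP; rewrite -rcons_uniq -lastI. Qed.

Lemma step_comp_sub u : u \in E -> u \in D /\ u \notin P.
Proof.
have bX : b \in D :\: [set v in P].
  by rewrite !inE step_end_notin_trail.1 step_walk_in_region // /b mem_last.
by move=> /(subsetP (component_sub e bX)); rewrite !inE => /andP[].
Qed.

Lemma step_head_in_trail : (f \in P) || (b == f).
Proof. by rewrite /P /b; case: (q) => [|x q'] /=; rewrite ?eqxx ?orbT ?mem_head. Qed.

Lemma step_comp_nbr u w : u \in E -> u != b -> e u w -> (w \in E) || (w \in P).
Proof.
move=> uE ub euw; have [uD uP] := step_comp_sub uE.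
have uf : u != f.
  by case/orP: step_head_in_trail => [fP | /eqP <-] //; apply: contraNneq uP => ->.
case/or3P: (dfs_closed st uD euw) => [wD | wQ | /andP[/eqP uf' _]]; last by rewrite uf' eqxx in uf.
  have [wP | wP] := boolP (w \in P); rewrite ?orbT //.
  by rewrite (component_closed uE) // !inE ?uD ?wD ?uP ?wP.
by move: ub; rewrite (lonely uE) ?eqxx //; apply/hasP; exists w.
Qed.

Lemma step_tail_path : path e b Qb.
Proof. exact: path_drop_find (dfs_tail_path st) bQ. Qed.

Lemma step_tail_last x : last x Qb = z.
Proof. by rewrite (last_drop _ z) ?(dfs_tail_last st) // -has_find. Qed.

Lemma leaf_path : (forall u, u \in E -> u = b) ->
  exists p, [/\ path e y p, uniq (y :: p), last y p = z & degree e b <= size p].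
Proof.
move=> leaf; exists (fp ++ q ++ Qb); split.
- by rewrite cat_path (dfs_path st) cat_path (path_induced pq) step_tail_path.
- rewrite -cat_cons cat_uniq (dfs_uniq st) cat_uniq drop_uniq ?(dfs_tail_uniq st) //.
  move: uq => /= /andP[fq ->]; rewrite andbT; apply/andP; split; apply/hasPn => v.
    rewrite mem_cat => /orP[vq | /mem_drop vQ]; last first.
      by apply/negP => /(dfs_disjoint st); rewrite vQ.
    apply/negP => /(dfs_region_path st (path_induced_sub pq vq)) vf.
    by move: fq; rewrite /f -vf vq.
  move=> /mem_drop vQ; apply/negP => /(path_induced_sub pq)/(dfs_region_tail st).
  by rewrite vQ.
- by rewrite last_cat last_cat step_tail_last.
have bD : b \in D by rewrite step_walk_in_region // /b mem_last.
have sub : {subset [set w | e b w] <= belast y fp ++ P ++ Qb}.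
  move=> w; rewrite inE => ebw; rewrite !mem_cat.
  have /or3P[wD | wQ | /andP[/eqP bf wfp]] := dfs_closed st bD ebw.
  - have [wP | wP] := boolP (w \in P); rewrite ?orbT //.
    have bE : b \in E := component_refl _ _ _.
    have [_ bP] := step_comp_sub bE.
    have wE : w \in E by apply: (component_closed bE); rewrite // !inE ?bD ?wD ?bP ?wP.
    by rewrite (leaf w wE) eirr in ebw.
  - by rewrite mem_drop_find ?orbT.
  - move: wfp; rewrite lastI -/f mem_rcons in_cons => /predU1P[wf | ->] //.
    by rewrite wf /f -bf eirr in ebw.
have := card_size (belast y fp ++ P ++ Qb).
rewrite !size_cat size_belast /P size_belast; apply: leq_trans.
exact/subset_leq_card/subsetP.
Qed.

Lemma step_comp_subset : E \subset D :\: [set v in P].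
Proof. by apply/subsetP => u /step_comp_sub[uD uP]; rewrite !inE uD uP. Qed.

Let B' := [set u in E | (u != b) && has (e u) P].

Lemma branch_target : (exists2 u0, u0 \in E & u0 != b) -> exists2 u, u \in E & u \in B'.
Proof.
case=> u0 u0E u0b; case: (set_0Vmem B') => [B'0 | [u uB']]; last first.
  by exists u => //; move: uB'; rewrite inE => /andP[].
have zQ := z_in_dfs_tail st.
have bD := (step_comp_sub (component_refl _ _ _ : b \in E)).1.
exfalso; apply: (two_conn (K := E :\ b) (v := b) (w := z)).
- by apply/set0Pn; exists u0; rewrite in_setD1 u0b.
- rewrite in_setD1 negb_and; apply/orP; right; apply/negP => /step_comp_sub[zD _].
  by move: zQ; rewrite (negbTE (dfs_region_tail st zD)).
- by apply: contraTneq zQ => ->; exact: (dfs_region_tail st bD).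
move=> u x; rewrite in_setD1 => /andP[ub uE] eux.
have /orP[xE | xP] := step_comp_nbr uE ub eux; first by rewrite in_setD1 xE andbT orNb.
have : u \in B' by rewrite inE uE ub; apply/hasP; exists x.
by rewrite B'0 inE.
Qed.

(* b' is the end of a walk q2 from b inside E to a vertex seeing the trail.
   The search backtracks along the trail to the last neighbour of b', jumps to
   b', and the reversed walk back to b becomes the new start of the tail. *)
Section Branch.
Variable q2 : seq T.
Let X := D :\: [set v in P].
Hypotheses (pq2 : path (induced e X) b q2) (uq2 : uniq (b :: q2)).
Let b' := last b q2.
Let P' := belast b q2.
Let E' := component e (X :\: [set v in P']) b'.
Hypothesis b'B' : b' \in B'.
Hypothesis lonely' : forall u, u \in E' -> u \in B' -> u = b'.
Variables s1 s2 : seq T.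
Hypothesis PE : P = f :: s1 ++ s2.
Hypotheses (b's1 : e b' (last f s1)) (b's2 : ~~ has (e b') s2).

Lemma branch_end_props : [/\ b' \in E, b' != b & has (e b') P].
Proof. by move: b'B'; rewrite !inE => /and3P[]. Qed.

Lemma branch_trail_in_comp : {subset P' <= E}.
Proof.
move=> u /mem_belast /predU1P[-> | /(path_component pq2) //]; exact: component_refl.
Qed.

Lemma branch_trail_head : exists t, P' = b :: t.
Proof.
have [_ b'b _] := branch_end_props.
have : q2 != [::] by apply: contraNneq b'b; rewrite /b' => ->.
by rewrite /P'; case: (q2) => [|x t] // _; exists (belast x t).
Qed.

Lemma branch_end_notin_trail : b' \notin P' /\ uniq P'.
Proof. by apply/andP; rewrite -rcons_uniq -lastI. Qed.

Lemma branch_comp_sub u : u \in E' -> u \in E /\ u \notin P'.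
Proof.
have [b'E _ _] := branch_end_props.
have b'X : b' \in X :\: [set v in P'].
  by rewrite in_setD (subsetP step_comp_subset _ b'E) andbT inE branch_end_notin_trail.1.
move=> uE'; split; last by move: (subsetP (component_sub e b'X) _ uE'); rewrite !inE => /andP[].
apply: component_trans b'E _.
exact: (subsetP (component_subset e b' (subsetDl X [set v in P'])) u uE').
Qed.

Lemma branch_head_notin_comp : f \notin E.
Proof. by apply/negP => /step_comp_sub[_]; rewrite PE mem_head. Qed.

Lemma branch_walk_split : q = s1 ++ rcons s2 b.
Proof. by have := lastI f q; rewrite -/P -/b PE rcons_cons -rcons_cat => -[]. Qed.

Lemma branch_prefix_in_trail : {subset s1 <= P}.
Proof. by move=> u us1; rewrite PE inE mem_cat us1 orbT. Qed.

Let fp' := fp ++ rcons s1 b'.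
Let Q' := rev P' ++ Qb.

Lemma branch_path : path e y fp' /\ uniq (y :: fp').
Proof.
have [b'E _ _] := branch_end_props; have [b'D b'P] := step_comp_sub b'E.
have /andP[fs1 us1] : (f \notin s1) && uniq s1.
  by move: uq; rewrite /= branch_walk_split cat_uniq mem_cat => /andP[/norP[-> _] /andP[->]].
split.
  rewrite cat_path (dfs_path st) rcons_path esym b's1 andbT.
  by move: (path_induced pq); rewrite branch_walk_split cat_path => /andP[].
rewrite -cat_cons cat_uniq (dfs_uniq st) rcons_uniq us1 andbT /=.
apply/andP; split; last by apply/negP => b's1'; move: b'P; rewrite (branch_prefix_in_trail b's1').
apply/hasPn => u; rewrite mem_rcons in_cons => /orP[/eqP-> | us1u]; apply/negP.
  by move=> /(dfs_region_path st b'D) b'f; move: branch_head_notin_comp; rewrite /f -b'f b'E.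
have uD := step_trail_in_region (branch_prefix_in_trail us1u).
by move=> /(dfs_region_path st uD) uf; move: fs1; rewrite /f -uf us1u.
Qed.

Lemma branch_trail_off_tail u : u \in P' -> [/\ u \in E, u \in D & u \notin Q].
Proof.
move=> /branch_trail_in_comp uE; have [uD _] := step_comp_sub uE.
by split=> //; apply: (dfs_region_tail st).
Qed.

Lemma branch_tail : [/\ Q' != [::], path e b' Q', uniq Q' & last z Q' = z].
Proof.
have [t Pt'] := branch_trail_head.
have lastP' x : last x (rev P') = b by rewrite Pt' rev_cons last_rcons.
split.
- by rewrite -size_eq0 size_cat size_rev Pt'.
- rewrite cat_path lastP' step_tail_path andbT /b' /P' rev_path.
  by rewrite (eq_path (e' := e)) ?(path_induced pq2) // => u v; apply: esym.
- rewrite cat_uniq rev_uniq branch_end_notin_trail.2 drop_uniq ?(dfs_tail_uniq st) // andbT.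
  apply/hasPn => u /mem_drop uQ; rewrite mem_rev.
  by apply/negP => /branch_trail_off_tail[_ _]; rewrite uQ.
- by rewrite last_cat lastP' step_tail_last.
Qed.

Lemma branch_disjoint u : u \in y :: fp' -> u \notin Q'.
Proof.
have [b'E _ _] := branch_end_props; have [b'D b'P] := step_comp_sub b'E.
rewrite -cat_cons mem_cat mem_rcons /Q' mem_cat mem_rev negb_or.
case/orP=> [ufp | /predU1P[-> | us1]].
- apply/andP; split; last by apply/negP => /mem_drop uQ; move: (dfs_disjoint st ufp); rewrite uQ.
  apply/negP => /branch_trail_off_tail[uE uD _]; move: branch_head_notin_comp.
  by rewrite /f -(dfs_region_path st uD ufp) uE.
- rewrite branch_end_notin_trail.1; apply/negP => /mem_drop; apply/negP.
  exact: (dfs_region_tail st b'D).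
- have uP := branch_prefix_in_trail us1; apply/andP; split.
    by apply/negP => /branch_trail_off_tail[/step_comp_sub[_]]; rewrite uP.
  by apply/negP => /mem_drop; apply/negP; apply: (dfs_region_tail st (step_trail_in_region uP)).
Qed.

Lemma branch_region_path u : u \in E' -> u \in y :: fp' -> u = b'.
Proof.
move=> /branch_comp_sub[/step_comp_sub[uD uP] _]; rewrite -cat_cons mem_cat mem_rcons in_cons.
case/or3P=> [ufp | /eqP // | us1].
  by move: uP; rewrite (dfs_region_path st uD ufp) PE mem_head.
by move: uP; rewrite (branch_prefix_in_trail us1).
Qed.

Lemma branch_region_tail u : u \in E' -> u \notin Q'.
Proof.
move=> /branch_comp_sub[/step_comp_sub[uD _] uP']; rewrite mem_cat mem_rev negb_or uP' /=.
by apply/negP => /mem_drop; apply/negP; apply: (dfs_region_tail st uD).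
Qed.

Lemma branch_closed u w : u \in E' -> e u w ->
  [|| w \in E', w \in Q' | (u == b') && (w \in y :: fp')].
Proof.
move=> uE' euw; have [uE uP'] := branch_comp_sub uE'.
have ub : u != b.
  by have [t Pt'] := branch_trail_head; apply: contraNneq uP' => ->; rewrite Pt' mem_head.
have /orP[wE | wP] := step_comp_nbr uE ub euw.
  have [wP' | wP'] := boolP (w \in P'); first by rewrite mem_cat mem_rev wP' orbT.
  by rewrite (component_closed uE') // in_setD inE ?uP' ?wP' (subsetP step_comp_subset).
have ub' : u = b' by apply: lonely' => //; rewrite inE uE ub; apply/hasP; exists w.
subst u.
rewrite eqxx /=; apply/or3P/Or33; rewrite /fp' -cat_cons mem_cat mem_rcons in_cons.
move: wP; rewrite PE in_cons mem_cat => /or3P[/eqP-> | -> | ws2]; rewrite ?orbT //.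
  by rewrite /f mem_last.
by move/hasPn: b's2 => /(_ w ws2); rewrite euw.
Qed.

Lemma branch_state : dfs_state fp' Q' E'.
Proof.
have [pfp ufp] := branch_path; have [nQ pQ uQ lQ] := branch_tail.
have lfp : last y fp' = b' by rewrite last_cat last_rcons.
split; rewrite ?lfp //.
- exact: path_sorted pQ.
- exact: branch_disjoint.
- exact: component_refl.
- exact: branch_region_path.
- exact: branch_region_tail.
- exact: branch_closed.
- exists b'; first exact: component_refl.
  by case: Q' nQ pQ => //= x t _ /andP[b'x _]; rewrite b'x.
Qed.

Lemma branch_smaller : #|E'| < #|D|.
Proof.
apply: proper_card; apply/properP; split.
  by apply/subsetP => u /branch_comp_sub[/step_comp_sub[]].
by exists f; [apply: (dfs_head st) | apply: contra branch_head_notin_comp => /branch_comp_sub[]].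
Qed.

End Branch.

End Step.

Lemma dfs_progress fp Q D : dfs_state fp Q D ->
  (exists p b, [/\ path e y p, uniq (y :: p), last y p = z & degree e b <= size p]) \/
  exists fp' Q' (D' : {set T}), dfs_state fp' Q' D' /\ #|D'| < #|D|.
Proof.
move=> st; set f := last y fp.
have reach : exists2 u, u \in component e D f & u \in [set u | has (e u) Q].
  by case: (dfs_reach st) => u uC uQ; exists u; rewrite // inE.
have [q [pq uq qB lonely]] := extremal_path reach.
set b := last f q in qB lonely; set P := belast f q in lonely.
set E := component _ _ b in lonely; rewrite inE in qB.
have {}lonely u : u \in E -> has (e u) Q -> u = b by move=> uE uQ; apply: lonely => //; rewrite inE.
have [leaf | /forall_inPn[u0 u0E u0b]] := boolP [forall u in E, u == b].
  have {}leaf u : u \in E -> u = b by move=> uE; apply/eqP; move/forall_inP: leaf; apply.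
  by left; have [p hp] := leaf_path st pq uq qB leaf; exists p, b.
right; have [u uE uB'] := branch_target st pq uq lonely (ex_intro2 _ _ u0 u0E u0b).
have [q2 [pq2 uq2 b'B' lonely']] := extremal_path (ex_intro2 _ _ u uE uB').
set b' := last b q2 in b'B' lonely'.
have hb'P : has (e b') P by move: b'B'; rewrite inE => /and3P[].
have [s PE] : exists s, P = f :: s.
  by move: hb'P; rewrite /P; case: (q) => [|x q'] //= _; exists (belast x q').
have hb'fs : has (e b') (f :: s) by rewrite -PE.
have [s1 [s2 [s12 b's1 b's2]]] := split_last_has hb'fs.
exists (fp ++ rcons s1 b'), (rev (belast b q2) ++ drop (find (e b) Q) Q).
exists (component e (D :\: [set v in P] :\: [set v in belast b q2]) b').
have PE' : P = f :: s1 ++ s2 by rewrite PE s12.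
split; first exact: (branch_state st pq uq qB lonely pq2 uq2 b'B' lonely' PE' b's1 b's2).
exact: (branch_smaller st pq uq uq2 b'B' PE').
Qed.

Lemma dfs_init : y != z -> dfs_state [::] [:: z] (setT :\ z).
Proof.
move=> yz; have yD : y \in setT :\ z by rewrite !inE yz.
split=> //=.
- by move=> u; rewrite !inE => /eqP->.
- by move=> u _; rewrite inE => /eqP.
- by move=> u; rewrite !inE andbT.
- by move=> u w _ _; rewrite !inE andbT; case: eqP.
set K := component e (setT :\ z) y.
have [u /andP[uK euz] | noz] := pickP [pred u | (u \in K) && e u z].
  by exists u => //=; rewrite euz.
exfalso; apply: (two_conn (K := K) (v := y) (w := z)).
- by apply/set0Pn; exists y; apply: component_refl.
- by apply/negP => /(subsetP (component_sub e yD)); rewrite !inE eqxx.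
- by rewrite eq_sym.
move=> u x uK eux; have [xz | xz] := eqVneq x z; first by move: (noz u); rewrite /= uK -xz eux.
have uD : u \in setT :\ z := subsetP (component_sub e yD) u uK.
by rewrite (component_closed uK uD) // !inE xz.
Qed.

Lemma long_path : y != z ->
  exists p b, [/\ path e y p, uniq (y :: p), last y p = z & degree e b <= size p].
Proof.
move=> /dfs_init; move: [::] [:: z] (setT :\ z) => fp Q D.
have [n] := ubnP #|D|; elim: n fp Q D => // n IH fp Q D Dn st.
have [// | [fp' [Q' [D' [st' D'D]]]]] := dfs_progress st.
by apply: (IH fp' Q' D') => //; apply: leq_trans D'D _.
Qed.

End LongPath.

Section CutDense.
Variables (T : finType) (e : rel T).
Hypotheses (esym : symmetric e) (eirr : irreflexive e).
Variables (K : {set T}) (v : T).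
Hypothesis closedK : forall u x, u \in K -> e u x -> (x \in K) || (x == v).

Lemma e_between_closed_le : e_between e K (~: K) <= #|K|.
Proof.
rewrite /e_between -[#|K|]muln1 -(cards1 v) -cardsX; apply/subset_leq_card/subsetP.
move=> [a b]; rewrite !inE /= => /andP[/andP[aK bK] eab].
by move: (closedK aK eab); rewrite (negbTE bK) aK.
Qed.

Lemma degree_lt_compl w : w \notin K -> w != v -> degree e w < #|~: K|.
Proof.
move=> wK wv; have sub : w |: [set u | e w u] \subset ~: K.
  apply/subsetP => u; rewrite !inE => /orP[/eqP-> // | ewu]; apply/negP => uK.
  by move: ewu; rewrite esym => /(closedK uK); rewrite (negbTE wK) (negbTE wv).
by have := subset_leq_card sub; rewrite cardsU1 inE eirr.
Qed.

End CutDense.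

Lemma cut_dense_no_cut_vertex (R : realFieldType) (rho : R) (T : finType) (e : rel T) k :
  symmetric e -> irreflexive e -> cut_dense rho e -> min_deg_ge_half e k ->
  (0 < rho)%R -> (2 <= rho * k%:R)%R -> no_cut_vertex e.
Proof.
(* All edges leaving K end at v, so rho |K| |~K| <= e(K, ~K) <= |K|, while
   ~K contains w and its neighbours, so rho |~K| >= rho (k + 2) / 2 > 1. *)
move=> esym eirr dense mindeg rho0 rhok K v w /set0Pn[u uK] wK wv closedK.
have cut : (rho * #|K|%:R * #|~: K|%:R <= (e_between e K (~: K))%:R)%R.
  by rewrite leNgt; apply/negP; apply: dense.
have eK : ((e_between e K (~: K))%:R <= #|K|%:R :> R)%R.
  by rewrite ler_nat (e_between_closed_le closedK).
have Kpos : (1 <= #|K|%:R :> R)%R by rewrite ler1n; apply/card_gt0P; exists u.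
have compl : (k%:R + 2 <= 2 * #|~: K|%:R :> R)%R.
  have := mindeg w; have := degree_lt_compl esym eirr closedK wK wv => h1 h2.
  have : (k + 2 <= 2 * #|~: K|)%N by lia.
  by rewrite -(ler_nat R) natrD natrM.
have rhoK : (rho * #|~: K|%:R <= 1)%R.
  rewrite -(ler_pM2l (lt_le_trans ltr01 Kpos)) mulr1 mulrA (mulrC _ rho).
  exact: le_trans cut eK.
have : (rho * (k%:R + 2) <= rho * (2 * #|~: K|%:R))%R by rewrite ler_pM2l.
lra.
Qed.

Lemma short_detour_path (T : finType) (e : rel T) k l y p :
    symmetric e -> min_deg_ge_half e k -> #|T| <= 100 * k -> 5 * l <= 2 * k ->
    path e y p -> uniq (y :: p) -> l < size p ->
  exists len, [/\ l + 1 <= len, len <= l + 3000 & is_path_len e y (last y p) len].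
Proof.
move=> esym mindeg hT hl pp up lp; set S := [set u in take l (y :: p)].
(* Outside the prefix S every vertex keeps at least k/2 - l >= k/10 neighbours. *)
have rdeg u v : induced e (~: S) u v -> #|T| < 1001 * #|[set w | induced e (~: S) u w]|.
  case/andP; rewrite inE => uS _; have := degree_induced_compl e uS.
  have : #|S| <= l by rewrite cardsE (leq_trans (card_size _)) // size_take_min geq_minl.
  have : 0 < #|T| by apply/card_gt0P; exists u.
  by have := mindeg u; lia.
have tail := suffix_avoids_prefix pp up (ltnW lp).
have [q [pq uq lq sq]] := short_path (induced_sym _ esym) rdeg tail.
have [pp' up' lp' sp'] := splice_path pp up (ltnW lp) pq uq.
rewrite (last_drop _ y) // in lq.
have xz : nth y (y :: p) l != last y p.
  by rewrite (last_nth y) (nth_uniq y) //= ?ltnS ?(ltnW lp) // neq_ltn lp.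
have q0 : 0 < size q.
  by case: q {pq uq sq pp' up' lp' sp'} lq => //= lq; rewrite lq eqxx in xz.
exists (l + size q); split; [lia | lia |].
by exists (take l p ++ q); rewrite lp' lq.
Qed.

Lemma nat_mul_eventually_ge (R : archiRealFieldType) (rho c : R) : (0 < rho)%R ->
  exists k0 : nat, forall k : nat, k0 <= k -> (c <= rho * k%:R)%R.
Proof.
move=> rho0; exists (Num.bound `|rho^-1 * c|%R) => k kk0.
rewrite -ler_pdivrMl // (le_trans (ler_norm _)) // ltW // (lt_le_trans (archi_boundP _)) //.
by rewrite ler_nat.
Qed.

Unset Implicit Arguments.

Theorem lemma7p8 (R : realType) (rho : R) (hrho : (0 < rho)%R) :
  exists k0 : nat, forall k : nat, k0 <= k ->
    forall (T : finType) (e : rel T),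
      simple_graph e ->
      cut_dense rho e ->
      #|T| <= 100 * k ->
      min_deg_ge_half e k ->
      forall l : nat, 5 * l <= 2 * k ->
      forall y z : T, y != z ->
        exists len : nat, [/\ l + 1 <= len, len <= l + 24000 & is_path_len e y z len].
Proof.
have [k0 k0P] := nat_mul_eventually_ge 2 hrho.
exists k0 => k kk0 T e [esym eirr] dense hT mindeg l hl y z yz.
have ncv := cut_dense_no_cut_vertex esym eirr dense mindeg hrho (k0P k kk0).
have [p [b [pp up lp bp]]] := long_path esym eirr ncv yz.
have lsp : l < size p.
  have := mindeg b; suff : 0 < size p by lia.
  by case: p {pp up bp} lp => //= zy; rewrite zy eqxx in yz.
have [len [l1 l2 plen]] := short_detour_path esym mindeg hT hl pp up lsp.
by exists len; rewrite -lp; split=> //; apply: leq_trans l2 _; rewrite leq_add2l.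
Qed.
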